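(* In the setting described in the context, assume that there exists a capacity $\mu:2^{\mathcal C}\to L$ with $S_\mu(x^{(k)})=\alpha^{(k)}$ for all $k$ (equivalently, $(S)$ is consistent and $e(\mathcal C)=1$; equivalently, $(\Sigma)$ is consistent and $f(\emptyset)=0$). Define $\mu_e(\emptyset)=0$, $\mu_e(A)=e(A)$ for $A\neq\emptyset$, and $\mu_f(\mathcal C)=1$, $\mu_f(A)=f(A)$ for $A\subsetneq\mathcal C$. Then: (i) $\mu_e$ is a capacity representing the training data, and it is the greatest such capacity; (ii) $\mu_f$ is a capacity representing the training data, and it is the lowest such capacity; (iii) every capacity $\mu:2^{\mathcal C}\to L$ representing the training data satisfies $\mu_f\le\mu\le\mu_e$ (pointwise on $2^{\mathcal C}$).
   Context: Let $\mathcal C=\{1,\dots,n\}$ and let $L$ be either a finite totally ordered set $0=\xi_1<\dots<\xi_l=1$ or $L=[0,1]$. A capacity is a map $\mu:2^{\mathcal C}\to L$ with $\mu(\emptyset)=0$, $\mu(\mathcal C)=1$, monotone for inclusion. Sugeno integral: $S_\mu(x)=\max_{A\subseteq\mathcal C}\min(\min_{i\in A}x_i,\mu(A))$ with $\min_{i\in\emptyset}x_i=1$. A capacity represents the training data $(x^{(k)},\alpha^{(k)})_{1\le k\le N}$ ($x^{(k)}\in L^n$, $\alpha^{(k)}\in L$) if $S_\mu(x^{(k)})=\alpha^{(k)}$ for all $k$. For nonempty $A$, $m_{k,A}=\min_{i\in A}x^{(k)}_i$; for $A\subsetneq\mathcal C$, $\gamma_{k,A}=\max_{i\in\mathcal C\setminus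 A}x^{(k)}_i$. $(S)$: unknowns $\xi_A$ ($A\ne\emptyset$), equations $\max_{A\ne\emptyset}\min(m_{k,A},\xi_A)=\alpha^{(k)}$; $(\Sigma)$: unknowns $\xi_A$ ($A\subsetneq\mathcal C$), equations $\min_{A\subsetneq\mathcal C}\max(\gamma_{k,A},\xi_A)=\alpha^{(k)}$. Gödel implication $a\to_G b=1$ if $a\le b$, else $b$; epsilon product $a\,\epsilon\,b=b$ if $a<b$, else $0$. $e(A)=\min_k(m_{k,A}\to_G\alpha^{(k)})$, $f(B)=\max_k(\gamma_{k,B}\,\epsilon\,\alpha^{(k)})$. *)

From mathcomp Require Import all_boot all_order.
Set Implicit Arguments. Unset Strict Implicit. Unset Printing Implicit Defensive.
Import Order.TTheory.
Local Open Scope order_scope.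

(* L is a bounded chain: totally ordered with bottom 0 = \bot and top 1 = \top.
   Criteria C = 'I_n; training data indexed by 'I_N. *)
Section Sugeno.
Context {disp : Order.disp_t} {L : tbOrderType disp} {n N : nat}.

Definition capacity (mu : {set 'I_n} -> L) : Prop :=
  [/\ mu set0 = \bot, mu setT = \top &
      forall A B : {set 'I_n}, A \subset B -> mu A <= mu B].

Definition minA (x : 'I_n -> L) (A : {set 'I_n}) : L :=
  \big[Order.min/ \top]_(i in A) x i.

Definition maxC (x : 'I_n -> L) (A : {set 'I_n}) : L :=
  \big[Order.max/ \bot]_(i in ~: A) x i.

Definition sugeno (mu : {set 'I_n} -> L) (x : 'I_n -> L) : L :=
  \big[Order.max/ \bot]_(A : {set 'I_n}) Order.min (minA x A) (mu A).

Definition represents (x : 'I_N -> 'I_n -> L) (alpha : 'I_N -> L)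
  (mu : {set 'I_n} -> L) : Prop :=
  forall k, sugeno mu (x k) = alpha k.

Definition godel_imp (a b : L) : L := if a <= b then \top else b.
Definition eps_prod (a b : L) : L := if a < b then b else \bot.

Definition e_fun (x : 'I_N -> 'I_n -> L) (alpha : 'I_N -> L) (A : {set 'I_n}) : L :=
  \big[Order.min/ \top]_(k < N) godel_imp (minA (x k) A) (alpha k).

Definition f_fun (x : 'I_N -> 'I_n -> L) (alpha : 'I_N -> L) (B : {set 'I_n}) : L :=
  \big[Order.max/ \bot]_(k < N) eps_prod (maxC (x k) B) (alpha k).

Definition mu_e x alpha (A : {set 'I_n}) : L :=
  if A == set0 then \bot else e_fun x alpha A.

Definition mu_f x alpha (A : {set 'I_n}) : L :=
  if A == setT then \top else f_fun x alpha A.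

End Sugeno.

(* The Sugeno integral is a max of terms min (m_A, mu A), and the Goedel
   implication is the residuum of min: c <= (a ->_G b) iff min a c <= b.
   Hence mu A <= e(A) exactly when every term of every S_mu(x^(k)) stays
   below alpha^(k): among set functions vanishing at the empty set, mu_e is
   the greatest one with S_mu <= alpha.
   Dually, for a monotone mu one has S_mu(x) <= max (gamma_A, mu A) for every
   A, and the epsilon product is the residuum of max:
   (a eps b) <= c iff b <= max a c.  Hence mu_f <= mu as soon as
   S_mu >= alpha.  Given one representing capacity mu, we get
   mu_f <= mu <= mu_e, which forces mu_e(C) = 1, mu_f(emptyset) = 0 and
   S_mu_f <= alpha <= S_mu_e; the remaining inequalities
   S_mu_e <= alpha <= S_mu_f hold for the data alone. *)

From Pilot Require Import Defs.
From mathcomp Require Import all_boot all_order.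
Import Order.TTheory.
(* [Order.TTheory] also exports lemmas named [minA] and [maxC]. *)
Import Defs.
Local Open Scope order_scope.

Section Residua.
Context {disp : Order.disp_t} {L : tbOrderType disp}.
Implicit Types a b c : L.

Lemma le_godel_imp a b c : (c <= godel_imp a b) = (Order.min a c <= b).
Proof.
rewrite /godel_imp; case: ifPn => [ab | nab]; first by rewrite lex1 ge_min ab.
by rewrite ge_min (negbTE nab).
Qed.

Lemma godel_imp_le_antimono a a' b :
  a' <= a -> godel_imp a b <= godel_imp a' b.
Proof.
move=> a'a; rewrite le_godel_imp; apply: le_trans (le_min2 a'a (lexx _)) _.
by rewrite -le_godel_imp.
Qed.

Lemma eps_prod_le a b c : (eps_prod a b <= c) = (b <= Order.max a c).
Proof.
by rewrite /eps_prod le_max; case: (ltP a b); rewrite ?le0x.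
Qed.

Lemma eps_prod_le_antimono a a' b :
  a' <= a -> eps_prod a b <= eps_prod a' b.
Proof.
move=> a'a; rewrite eps_prod_le; apply: le_trans (le_max2 a'a (lexx _)).
by rewrite -eps_prod_le.
Qed.

End Residua.

Section SugenoBounds.
Context {disp : Order.disp_t} {L : tbOrderType disp} {n : nat}.
Implicit Types (y : 'I_n -> L) (A B : {set 'I_n}) (mu nu : {set 'I_n} -> L)
  (a : L).

Lemma minA_le_subset y A B : A \subset B -> minA y B <= minA y A.
Proof.
move=> sAB; apply: le_bigmin => [|i iA]; first exact: lex1.
exact/bigmin_le_cond/(subsetP sAB).
Qed.

Lemma maxC_le_subset y A B : A \subset B -> maxC y B <= maxC y A.
Proof.
move=> sAB; apply: bigmax_le => [|i]; first exact: le0x.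
rewrite !inE => iB; apply: le_bigmax_cond.
by rewrite inE; apply: contra iB; apply: (subsetP sAB).
Qed.

Lemma maxC_level_lt y a :
  a != \bot -> maxC y [set i | a <= y i] < a.
Proof.
move=> a0; apply/bigmax_ltP; split; first by rewrite lt_def a0 le0x.
by move=> i; rewrite !inE ltNge.
Qed.

Lemma sugeno_le mu y a :
  (sugeno mu y <= a) = [forall A, Order.min (minA y A) (mu A) <= a].
Proof.
apply/idP/forallP => [le_a A | le_a]; last by apply: bigmax_le.
by apply: le_trans le_a; apply: (bigmax_sup A).
Qed.

Lemma le_sugeno mu nu y :
  (forall A, mu A <= nu A) -> sugeno mu y <= sugeno nu y.
Proof. by move=> le_mu_nu; apply: le_bigmax2 => A _; apply: le_min2. Qed.

Lemma le_sugeno_level mu y a :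
  a <= mu [set i | a <= y i] -> a <= sugeno mu y.
Proof.
move=> a_mu; apply: (bigmax_sup [set i | a <= y i]) => //.
rewrite le_min a_mu andbT; apply: le_bigmin => [|i]; first exact: lex1.
by rewrite inE.
Qed.

(* For [B] not inside [A], the term of [B] is bounded by some [y i] with
   [i] outside [A], hence by [maxC y A]. *)
Lemma sugeno_le_maxC mu y A :
  {homo mu : B C / B \subset C >-> B <= C} ->
  sugeno mu y <= Order.max (maxC y A) (mu A).
Proof.
move=> mu_mono; rewrite sugeno_le; apply/forallP => B; rewrite ge_min !le_max.
have [sBA | /subsetPn[i iB iA]] := boolP (B \subset A).
  by rewrite (mu_mono _ _ sBA) ?orbT.
apply/orP; left; apply/orP; left; apply: (@le_trans _ _ (y i)).
  exact: bigmin_le_cond.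
by apply: le_bigmax_cond; rewrite inE.
Qed.

End SugenoBounds.

Section Representation.
Context {disp : Order.disp_t} {L : tbOrderType disp} {n N : nat}.
Variables (x : 'I_N -> 'I_n -> L) (alpha : 'I_N -> L).
Implicit Types (A B : {set 'I_n}) (mu : {set 'I_n} -> L).

Lemma le_mu_e mu :
  capacity mu -> represents x alpha mu -> forall A, mu A <= mu_e x alpha A.
Proof.
move=> [mu0 _ _] rep A; rewrite /mu_e; case: eqP => [-> | _]; first by rewrite mu0.
apply: le_bigmin => [|k _]; first exact: lex1.
by rewrite le_godel_imp -(rep k) /sugeno; apply: (bigmax_sup A).
Qed.

Lemma mu_f_le mu :
  capacity mu -> represents x alpha mu -> forall A, mu_f x alpha A <= mu A.
Proof.
move=> [_ muT mu_mono] rep A; rewrite /mu_f; case: eqP => [-> | _].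
  by rewrite muT.
apply: bigmax_le => [|k _]; first exact: le0x.
by rewrite eps_prod_le -(rep k); exact: sugeno_le_maxC.
Qed.

Lemma sugeno_mu_e_le k : sugeno (mu_e x alpha) (x k) <= alpha k.
Proof.
rewrite sugeno_le; apply/forallP => A; rewrite /mu_e.
case: eqP => _; first by rewrite ge_min le0x orbT.
by rewrite -le_godel_imp; apply: bigmin_le.
Qed.

Lemma le_sugeno_mu_f k : alpha k <= sugeno (mu_f x alpha) (x k).
Proof.
apply: le_sugeno_level; rewrite /mu_f; case: eqP => _; first exact: lex1.
have [-> | ak0] := eqVneq (alpha k) \bot; first exact: le0x.
apply: (bigmax_sup k) => //.
by rewrite /eps_prod maxC_level_lt.
Qed.

Lemma mu_e_monotone : {homo mu_e x alpha : A B / A \subset B >-> A <= B}.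
Proof.
move=> A B sAB; rewrite /mu_e; have [// | A0] := eqVneq A set0.
have B0 : B != set0 by apply: contraNneq A0 => B0; rewrite -subset0 -B0.
rewrite (negbTE B0); apply: le_bigmin2 => k _.
exact/godel_imp_le_antimono/minA_le_subset.
Qed.

Lemma mu_f_monotone : {homo mu_f x alpha : A B / A \subset B >-> A <= B}.
Proof.
move=> A B sAB; rewrite /mu_f; have [// | BT] := eqVneq B setT.
have AT : A != setT by apply: contraNneq BT => AT; rewrite -subTset -AT.
rewrite (negbTE AT); apply: le_bigmax2 => k _.
exact/eps_prod_le_antimono/maxC_le_subset.
Qed.

Hypothesis representable :
  exists mu : {set 'I_n} -> L, capacity mu /\ represents x alpha mu.

Lemma capacity_mu_e : capacity (mu_e x alpha).
Proof.
have [mu [cap rep]] := representable; have [_ muT _] := cap.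
split; [by rewrite /mu_e eqxx | | exact: mu_e_monotone].
by apply/eqP; rewrite eq_le lex1 -muT; apply: le_mu_e.
Qed.

Lemma capacity_mu_f : capacity (mu_f x alpha).
Proof.
have [mu [cap rep]] := representable; have [mu0 _ _] := cap.
split; [| by rewrite /mu_f eqxx | exact: mu_f_monotone].
by apply/eqP; rewrite eq_le le0x -mu0 andbT; apply: mu_f_le.
Qed.

Lemma represents_mu_e : represents x alpha (mu_e x alpha).
Proof.
have [mu [cap rep]] := representable.
move=> k; apply/le_anti; rewrite sugeno_mu_e_le -{1}(rep k).
exact/le_sugeno/le_mu_e.
Qed.

Lemma represents_mu_f : represents x alpha (mu_f x alpha).
Proof.
have [mu [cap rep]] := representable.
move=> k; apply/le_anti; rewrite le_sugeno_mu_f andbT -(rep k).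
exact/le_sugeno/mu_f_le.
Qed.

End Representation.

Theorem corollary1 (disp : Order.disp_t) (L : tbOrderType disp) (n N : nat)
  (x : 'I_N -> 'I_n -> L) (alpha : 'I_N -> L) :
  (exists mu : {set 'I_n} -> L, capacity mu /\ represents x alpha mu) ->
  [/\ (* (i) *)
      capacity (mu_e x alpha) /\ represents x alpha (mu_e x alpha)
      /\ (forall mu, capacity mu -> represents x alpha mu ->
            forall A, mu A <= mu_e x alpha A),
      (* (ii) *)
      capacity (mu_f x alpha) /\ represents x alpha (mu_f x alpha)
      /\ (forall mu, capacity mu -> represents x alpha mu ->
            forall A, mu_f x alpha A <= mu A) &
      (* (iii) *)
      forall mu : {set 'I_n} -> L, capacity mu -> represents x alpha mu ->
        forall A, mu_f x alpha A <= mu A <= mu_e x alpha A].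
Proof.
move=> representable; split.
- split; [exact: capacity_mu_e | split; [exact: represents_mu_e | exact: le_mu_e]].
- split; [exact: capacity_mu_f | split; [exact: represents_mu_f | exact: mu_f_le]].
- by move=> mu cap rep A; rewrite mu_f_le ?le_mu_e.
Qed.
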